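(* For $\pi,\varrho\in K$ let $A_{\pi,\varrho}$ be the two-dimensional algebra with basis $r,r^2$ and multiplication $r\cdot r=r^2$, $r\cdot r^2=\pi r^2$, $r^2\cdot r=\varrho r^2$, $r^2\cdot r^2=\pi\varrho r^2$. Then every $A_{\pi,\varrho}$ is isomorphic to exactly one of the five algebras $A_{0,0},A_{1,1},A_{0,1},A_{1,0},A_{1,-1}$, and these five are pairwise nonisomorphic. Precisely: $A_{0,\varrho}\cong A_{0,1}$ for $\varrho\ne0$, $A_{\pi,0}\cong A_{1,0}$ for $\pi\neq0$, $A_{\pi,\pi}\cong A_{1,1}$ for $\pi\ne0$, and $A_{\pi,\varrho}\cong A_{1,-1}$ for $\pi\ne\varrho$ both nonzero.
   Context: $K$ is a field of characteristic $0$; algebras are not necessarily associative. *)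

From HB Require Import structures.
From mathcomp Require Import all_boot all_order all_algebra.
Set Implicit Arguments. Unset Strict Implicit. Unset Printing Implicit Defensive.
Import GRing.Theory.
Local Open Scope ring_scope.

(* Elements of A_{pi,rho} are row vectors x = x_0 r + x_1 r^2 in K^2,
   coordinates in the basis (r, r^2). *)
Definition alg_mul (K : fieldType) (pi rho : K) (x y : 'rV[K]_2) : 'rV[K]_2 :=
  let a := x ord0 0 in let b := x ord0 1 in
  let c := y ord0 0 in let d := y ord0 1 in
  (* a c (r r) + a d (r r^2) + b c (r^2 r) + b d (r^2 r^2) *)
  \row_(j < 2) (if j == 0 :> nat then 0
                else a * c + pi * (a * d) + rho * (b * c) + pi * rho * (b * d)).

Definition alg_iso (K : fieldType) (pi rho pi' rho' : K) : Prop :=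
  exists f : 'rV[K]_2 -> 'rV[K]_2,
    [/\ (forall (a : K) (x y : 'rV[K]_2), f (a *: x + y) = a *: f x + f y),
        bijective f &
        forall x y, f (alg_mul pi rho x y) = alg_mul pi' rho' (f x) (f y)].

Definition canon_pi (K : fieldType) (i : 'I_5) : K :=
  match val i with 0 => 0 | 1 => 1 | 2 => 0 | 3 => 1 | _ => 1 end.
Definition canon_rho (K : fieldType) (i : 'I_5) : K :=
  match val i with 0 => 0 | 1 => 1 | 2 => 1 | 3 => 0 | _ => -1 end.

(* An isomorphism A_{pi,rho} -> A_{pi',rho'} is fixed by the image p r + q r^2
   of the generator r; it must send r^2 to (p + rho' q)(p + pi' q) r^2, and
   comparing r r^2 and r^2 r gives pi = (p + rho' q) pi', rho = rho' (p + pi' q),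
   with p and both factors nonzero.  Conversely any such data defines an
   isomorphism.  Hence the vanishing of pi, of rho and of pi - rho are
   invariants, which separate the five normal forms, and in characteristic 0 the
   data can be chosen to reach a normal form (for pi != rho take
   p = (pi - rho)/2, q = -(pi + rho)/2 against A_{1,-1}). *)
Set Warnings "-notation-overridden,-ambiguous-paths".
From mathcomp Require Import all_boot all_order all_algebra.
From mathcomp Require Import ring.
Import GRing.Theory.
Local Open Scope ring_scope.
Set Implicit Arguments. Unset Strict Implicit.

Section TwoDimAlgebra.
Variable K : fieldType.

Definition vec2 (a b : K) : 'rV[K]_2 := \row_(j < 2) (if j == 0 :> nat then a else b).

Lemma rv2P (x y : 'rV[K]_2) : x ord0 0 = y ord0 0 -> x ord0 1 = y ord0 1 -> x = y.
Proof.
move=> eq0 eq1; apply/rowP => -[[|[|//]] lt_j2].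
- by rewrite (_ : Ordinal _ = 0) //; apply: val_inj.
- by rewrite (_ : Ordinal _ = 1) //; apply: val_inj.
Qed.

Lemma alg_mul_vec2 (pi rho a b c d : K) :
  alg_mul pi rho (vec2 a b) (vec2 c d)
  = vec2 0 (a * c + pi * (a * d) + rho * (b * c) + pi * rho * (b * d)).
Proof. by apply: rv2P; rewrite !mxE. Qed.

Lemma vec2E (x : 'rV[K]_2) : x = vec2 (x ord0 0) (x ord0 1).
Proof. by apply: rv2P; rewrite mxE. Qed.

Section IsoCoefficients.
Variables (pi rho pi' rho' : K) (f : 'rV[K]_2 -> 'rV[K]_2).
Hypotheses (f_lin : forall (a : K) (x y : 'rV[K]_2), f (a *: x + y) = a *: f x + f y)
  (f_inj : injective f)
  (f_mul : forall x y, f (alg_mul pi rho x y) = alg_mul pi' rho' (f x) (f y)).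

Let f0 : f 0 = 0.
Proof. by have := f_lin 1 0 0; rewrite scale1r addr0 scale1r -{1}[f 0]addr0 => /addrI. Qed.

Let fZ a x : f (a *: x) = a *: f x.
Proof. by rewrite -[a *: x]addr0 f_lin f0 addr0. Qed.

Let p := f (vec2 1 0) ord0 0.
Let q := f (vec2 1 0) ord0 1.
Let v := (p + rho' * q) * (p + pi' * q).

Let f_r : f (vec2 1 0) = vec2 p q.
Proof. exact: vec2E. Qed.

Let f_r2 : f (vec2 0 1) = vec2 0 v.
Proof.
have -> : vec2 0 1 = alg_mul pi rho (vec2 1 0) (vec2 1 0).
  by rewrite alg_mul_vec2; congr vec2; ring.
by rewrite f_mul f_r alg_mul_vec2; congr vec2; rewrite /v; ring.
Qed.

Let v_neq0 : v != 0.
Proof.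
apply/eqP => v0; have /f_inj/(congr1 (fun w : 'rV_2 => w ord0 1)) : f (vec2 0 1) = f 0.
  by rewrite f_r2 f0 v0; apply: rv2P; rewrite !mxE.
by rewrite !mxE => /eqP; rewrite oner_eq0.
Qed.

Let p_neq0 : p != 0.
Proof.
apply/eqP => p0.
have : f (v *: vec2 1 0 + (- q) *: vec2 0 1) = f 0.
  by rewrite f_lin fZ f_r f_r2 f0; apply: rv2P; rewrite !mxE /= ?p0; ring.
move/f_inj/(congr1 (fun w : 'rV_2 => w ord0 0)); rewrite !mxE /= => h.
by move/eqP: v_neq0; apply; rewrite -h; ring.
Qed.

Let pi_eq : pi = (p + rho' * q) * pi'.
Proof.
apply: (mulIf v_neq0); have := f_mul (vec2 1 0) (vec2 0 1).
rewrite alg_mul_vec2 f_r f_r2 alg_mul_vec2 (_ : vec2 0 _ = pi *: vec2 0 1).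
  by rewrite fZ f_r2 => /(congr1 (fun w : 'rV_2 => w ord0 1)); rewrite !mxE /= => ->; ring.
by apply: rv2P; rewrite !mxE /=; ring.
Qed.

Let rho_eq : rho = rho' * (p + pi' * q).
Proof.
apply: (mulIf v_neq0); have := f_mul (vec2 0 1) (vec2 1 0).
rewrite alg_mul_vec2 f_r f_r2 alg_mul_vec2 (_ : vec2 0 _ = rho *: vec2 0 1).
  by rewrite fZ f_r2 => /(congr1 (fun w : 'rV_2 => w ord0 1)); rewrite !mxE /= => ->; ring.
by apply: rv2P; rewrite !mxE /=; ring.
Qed.

Lemma alg_hom_coeffs : exists p q : K,
  [/\ p != 0, p + rho' * q != 0, p + pi' * q != 0,
      pi = (p + rho' * q) * pi' & rho = rho' * (p + pi' * q)].
Proof.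
have [A0 B0] : p + rho' * q != 0 /\ p + pi' * q != 0.
  by apply/andP; rewrite -negb_or -mulf_eq0.
by exists p, q.
Qed.

End IsoCoefficients.

Lemma alg_isoP (pi rho pi' rho' : K) :
  alg_iso pi rho pi' rho' <->
  exists p q : K,
    [/\ p != 0, p + rho' * q != 0, p + pi' * q != 0,
        pi = (p + rho' * q) * pi' & rho = rho' * (p + pi' * q)].
Proof.
split=> [[f [f_lin f_bij f_mul]]|[p [q [p0 A0 B0 -> ->]]]].
  exact: alg_hom_coeffs f_lin (bij_inj f_bij) f_mul.
set v := (p + rho' * q) * (p + pi' * q).
have v0 : v != 0 by rewrite mulf_neq0.
pose f (x : 'rV[K]_2) := vec2 (p * x ord0 0) (q * x ord0 0 + v * x ord0 1).
pose g (x : 'rV[K]_2) := vec2 (x ord0 0 / p) ((x ord0 1 - q * (x ord0 0 / p)) / v).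
exists f; split.
- by move=> a x y; apply: rv2P; rewrite !mxE /=; ring.
- by exists g => x; apply: rv2P; rewrite !mxE /=; field; rewrite ?v0 ?p0.
- by move=> x y; apply: rv2P; rewrite !mxE /= /v; ring.
Qed.

Definition iso_type (pi rho : K) := (pi == 0, rho == 0, pi == rho).

Lemma alg_iso_type (pi rho pi' rho' : K) :
  alg_iso pi rho pi' rho' -> iso_type pi rho = iso_type pi' rho'.
Proof.
case/alg_isoP=> p [q [p0 A0 B0 -> ->]].
rewrite /iso_type !mulf_eq0 (negbTE A0) (negbTE B0) /= orbF.
have -> : ((p + rho' * q) * pi' == rho' * (p + pi' * q)) = (p * (pi' - rho') == 0).
  by rewrite -subr_eq0; congr (_ == 0); ring.
by rewrite mulf_eq0 (negbTE p0) subr_eq0.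
Qed.

Lemma alg_iso_scale (pi rho pi' rho' c : K) :
  c != 0 -> pi = c * pi' -> rho = c * rho' -> alg_iso pi rho pi' rho'.
Proof.
move=> c0 -> ->; apply/alg_isoP; exists c, 0.
by rewrite !mulr0 !addr0 c0 [rho' * c]mulrC.
Qed.

Lemma alg_iso_zero_left (rho : K) : rho != 0 -> alg_iso 0 rho 0 1.
Proof. by move=> rho0; apply: (alg_iso_scale rho0); rewrite ?mulr0 ?mulr1. Qed.

Lemma alg_iso_zero_right (pi : K) : pi != 0 -> alg_iso pi 0 1 0.
Proof. by move=> pi0; apply: (alg_iso_scale pi0); rewrite ?mulr0 ?mulr1. Qed.

Lemma alg_iso_diag (pi : K) : pi != 0 -> alg_iso pi pi 1 1.
Proof. by move=> pi0; apply: (alg_iso_scale pi0); rewrite mulr1. Qed.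

Hypothesis charK0 : [pchar K] =i pred0.

Let two_neq0 : (2%:R : K) != 0.
Proof. by rewrite ((pcharf0P _).1 charK0 2). Qed.

Lemma alg_iso_generic (pi rho : K) :
  pi != 0 -> rho != 0 -> pi != rho -> alg_iso pi rho 1 (-1).
Proof.
move=> pi0 rho0 pi_rho; apply/alg_isoP.
exists ((pi - rho) / 2%:R), (- (pi + rho) / 2%:R).
have -> : (pi - rho) / 2%:R + -1 * (- (pi + rho) / 2%:R) = pi by field.
have -> : (pi - rho) / 2%:R + 1 * (- (pi + rho) / 2%:R) = - rho by field.
split; rewrite ?oppr_eq0 //; last by ring.
- by rewrite mulf_neq0 ?invr_eq0 // subr_eq0.
- by rewrite mulr1.
Qed.

Lemma canon_type_inj (i j : 'I_5) :
  iso_type (canon_pi K i) (canon_rho K i) = iso_type (canon_pi K j) (canon_rho K j) ->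
  i = j.
Proof.
have h10 : ((1 : K) == 0) = false by rewrite oner_eq0.
have h01 : ((0 : K) == 1) = false by rewrite eq_sym oner_eq0.
have hN0 : ((-1 : K) == 0) = false by rewrite oppr_eq0 oner_eq0.
have h1N : ((1 : K) == -1) = false.
  by apply/negbTE; rewrite -subr_eq0 opprK -(natrD K 1 1); exact: two_neq0.
case: i j => [[|[|[|[|[|//]]]]] ?] [[|[|[|[|[|//]]]]] ?];
  rewrite /iso_type /canon_pi /canon_rho /= ?h10 ?h01 ?hN0 ?h1N ?eqxx => eq_type;
  apply: val_inj => //=; by case: eq_type.
Qed.

Lemma alg_iso_canon (pi rho : K) :
  exists i : 'I_5, alg_iso pi rho (canon_pi K i) (canon_rho K i).
Proof.
have [-> | pi0] := eqVneq pi 0; have [-> | rho0] := eqVneq rho 0.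
- exists (Ordinal (isT : (0 < 5)%N)).
  by apply: (alg_iso_scale (oner_neq0 K)); rewrite mulr0.
- by exists (Ordinal (isT : (2 < 5)%N)); exact: alg_iso_zero_left.
- by exists (Ordinal (isT : (3 < 5)%N)); exact: alg_iso_zero_right.
have [<- | pi_rho] := eqVneq pi rho.
  by exists (Ordinal (isT : (1 < 5)%N)); exact: alg_iso_diag.
by exists (Ordinal (isT : (4 < 5)%N)); exact: alg_iso_generic.
Qed.

End TwoDimAlgebra.

Theorem proposition5p1 (K : fieldType) (charK0 : [pchar K] =i pred0) :
  (forall pi rho : K, exists i : 'I_5,
      alg_iso pi rho (canon_pi K i) (canon_rho K i) /\
      forall j : 'I_5, alg_iso pi rho (canon_pi K j) (canon_rho K j) -> j = i) /\
  (forall i j : 'I_5, i != j ->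
      ~ alg_iso (canon_pi K i) (canon_rho K i) (canon_pi K j) (canon_rho K j)) /\
  (forall rho : K, rho != 0 -> alg_iso 0 rho 0 1) /\
  (forall pi : K, pi != 0 -> alg_iso pi 0 1 0) /\
  (forall pi : K, pi != 0 -> alg_iso pi pi 1 1) /\
  (forall pi rho : K, pi != 0 -> rho != 0 -> pi != rho -> alg_iso pi rho 1 (-1)).
Proof.
split.
  move=> pi rho; have [i iso_i] := alg_iso_canon charK0 pi rho.
  exists i; split=> // j iso_j; apply: (canon_type_inj charK0).
  by rewrite -(alg_iso_type iso_i) -(alg_iso_type iso_j).
split; first by move=> i j /eqP neq_ij /alg_iso_type/(canon_type_inj charK0).
do 3 (split; first by [exact: alg_iso_zero_left | exact: alg_iso_zero_right | exact: alg_iso_diag]).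
exact: alg_iso_generic.
Qed.
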